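(* Let $V$ be a complex vector space of finite dimension $N$. Let $F\in \mathrm{End}(V\otimes V)$ be an involutive symmetry and let $R=R(q)$ be a family of Hecke symmetries depending analytically on $q$ near $q=1$ with $R(1)=F$ and with $R(q)$, $F$ compatible for each $q$. Let $r\in\mathrm{End}(V\otimes V)$ be defined by the expansion $R(q)F=I+h\,r+O(h^2)$, $q=e^h$. Define the $\mathrm{End}(V\otimes V)$-valued function $$ r(u,v)=\frac{F\,u}{u-v}-\frac{r}{2}. $$ Then (1) $r_{\overline{21}}(v,u)+r_{\overline{12}}(u,v)=0$; (2) $[r_{\overline{12}}(u,v), r_{\overline{13}}(u,w)]+[r_{\overline{12}}(u,v), r_{\overline{23}}(v,w)]+[r_{\overline{13}}(u,w), r_{\overline{23}}(v,w)]=0$ in $\mathrm{End}(V^{\otimes 3})$, for all pairwise distinct $u,v,w$ (with $u\ne v$ etc.).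
   Context: A braiding is an invertible $R\in\mathrm{End}(V\otimes V)$ with $(R\otimes I)(I\otimes R)(R\otimes I)=(I\otimes R)(R\otimes I)(I\otimes R)$; it is an involutive symmetry if $R^2=I$, a Hecke symmetry if $(R-qI)(R+q^{-1}I)=0$, $q\ne\pm1$. $X_{12}=X\otimes I$, $X_{23}=I\otimes X$. Compatibility of $R,F$: $R_{12}F_{23}F_{12}=F_{23}F_{12}R_{23}$ and $R_{23}F_{12}F_{23}=F_{12}F_{23}R_{12}$. Overlined indices: for $X=X(a,b)\in\mathrm{End}(V\otimes V)$, $X_{\overline{12}}(a,b)=X(a,b)_{12}$, $X_{\overline{13}}(a,b)=F_{23}X(a,b)_{12}F_{23}^{-1}$, $X_{\overline{23}}(a,b)=F_{12}F_{23}X(a,b)_{12}F_{23}^{-1}F_{12}^{-1}$, and $X_{\overline{21}}(a,b)=F\,X(a,b)\,F$ (valid since $F$ is involutive). $[A,B]=AB-BA$. *)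

From HB Require Import structures.
From mathcomp Require Import all_boot all_order all_algebra.
From mathcomp Require Import reals sequences.
From mathcomp Require Import complex mxtens.

Set Implicit Arguments.
Unset Strict Implicit.
Unset Printing Implicit Defensive.

Import Order.TTheory GRing.Theory Num.Theory.
Local Open Scope ring_scope.

(* V = C^N ; End(V (x) V) = 'M[C]_(N*N) ; End(V^{(x)3}) = 'M[C]_(N*N*N),
   tensor product = Kronecker product tensmx (index (i,j) |-> i*N + j). *)

Section TensorOps.
Variables (C : fieldType) (N : nat).

Definition op12 (X : 'M[C]_(N * N)) : 'M[C]_(N * N * N) :=
  X *t (1%:M : 'M[C]_N).

(* X_{23} = I (x) X, re-associated V(x)(V(x)V) = (V(x)V)(x)V *)
Definition op23 (X : 'M[C]_(N * N)) : 'M[C]_(N * N * N) :=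
  castmx (mulnA N N N, mulnA N N N) ((1%:M : 'M[C]_N) *t X).

Definition braiding (X : 'M[C]_(N * N)) : Prop :=
  X \in unitmx /\
  op12 X *m op23 X *m op12 X = op23 X *m op12 X *m op23 X.

Definition involutive_symmetry (X : 'M[C]_(N * N)) : Prop :=
  braiding X /\ X *m X = 1%:M.

Definition hecke_symmetry (q : C) (X : 'M[C]_(N * N)) : Prop :=
  braiding X /\ (X - q%:M) *m (X + q^-1%:M) = 0 /\ q != 1 /\ q != -1.

Definition compatible (R F : 'M[C]_(N * N)) : Prop :=
  op12 R *m op23 F *m op12 F = op23 F *m op12 F *m op23 R /\
  op23 R *m op12 F *m op23 F = op12 F *m op23 F *m op12 R.

Definition bar12 (X : 'M[C]_(N * N)) : 'M[C]_(N * N * N) := op12 X.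
Definition bar13 (F X : 'M[C]_(N * N)) : 'M[C]_(N * N * N) :=
  op23 F *m op12 X *m invmx (op23 F).
Definition bar23 (F X : 'M[C]_(N * N)) : 'M[C]_(N * N * N) :=
  op12 F *m op23 F *m op12 X *m invmx (op23 F) *m invmx (op12 F).
Definition bar21 (F X : 'M[C]_(N * N)) : 'M[C]_(N * N) := F *m X *m F.

Definition commutator {n : nat} (A B : 'M[C]_n) : 'M[C]_n := A *m B - B *m A.

Definition rfun (F r : 'M[C]_(N * N)) (u v : C) : 'M[C]_(N * N) :=
  (u / (u - v)) *: F - 2^-1 *: r.

End TensorOps.

Local Open Scope complex_scope.

Section Analytic.
Variables (R : realType) (N : nat).

Definition cseries_to (f : nat -> R[i]) (l : R[i]) : Prop :=
  forall eps : R, 0 < eps -> exists n0 : nat, forall n : nat, (n0 <= n)%N ->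
    `| \sum_(k < n) f k - l | < eps%:C.

Definition analytic_at1 (Rq : R -> 'M[R[i]]_(N * N)) : Prop :=
  exists (a : nat -> 'M[R[i]]_(N * N)) (rho : R), 0 < rho /\
    forall q : R, `|q - 1| < rho -> forall i j,
      cseries_to (fun k => a k i j * ((q - 1) ^+ k)%:C) (Rq q i j).

Definition first_order_coeff (Rq : R -> 'M[R[i]]_(N * N)) (F r : 'M[R[i]]_(N * N)) : Prop :=
  exists (K delta : R), 0 < delta /\
    forall h : R, `|h| < delta -> forall i j,
      `| (Rq (expR h) *m F - 1%:M - h%:C *: r) i j | <= (K * h ^+ 2)%:C.

End Analytic.

(* Expanding the Hecke relation
   (R - q)(R + q^-1) = 0 at q = e^h to first order in h gives the unitarity relation
   F r F + r = 2 F. Compatibility expresses R_23 as the conjugate of R_12 by F_12 F_23,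
   so the braid relation for R becomes the quantum Yang-Baxter equation, in overlined
   indices, for s = R_12 F_12 = 1 + h r_12 + O(h^2); its h^2 coefficient is the
   classical Yang-Baxter equation for r_12. Both claims are then algebraic: (1) is
   unitarity, and (2) follows from the classical equation, unitarity, the symmetric-group
   relations between F_12, F_13 = F_23 F_12 F_23 and F_23, and the identity
   k1 k2 - k1 k3 + k2 k3 = k2 for k1 = u/(u-v), k2 = u/(u-w), k3 = v/(v-w). *)

From HB Require Import structures.
From mathcomp Require Import all_boot all_order all_algebra ssrAC.
From mathcomp Require Import classical_sets filter topology normedtype reals sequences exp.
From mathcomp Require Import complex mxtens.
From mathcomp Require Import ring lra.
Import Order.TTheory GRing.Theory Num.Theory numFieldTopology.Exports numFieldNormedType.Exports.
Local Open Scope classical_set_scope.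
Local Open Scope ring_scope.
Local Open Scope complex_scope.
Set Implicit Arguments.
Unset Strict Implicit.
Unset Printing Implicit Defensive.

Section SquareMatrices.
Variables (K : fieldType) (n : nat).
Implicit Types (X Y Z W : 'M[K]_n) (k : K).

Lemma scalemxAl_mul k X Y : k *: (X * Y) = k *: X * Y.
Proof. exact: scalemxAl. Qed.

Lemma scalemxAr_mul k X Y : k *: (X * Y) = X * (k *: Y).
Proof. exact: scalemxAr. Qed.

Lemma scalar_mxMl k X : k%:M * X = k *: X.
Proof. exact: mul_scalar_mx. Qed.

Lemma scalar_mxMr k X : X * k%:M = k *: X.
Proof. exact: mul_mx_scalar. Qed.

Lemma hecke_quadraticE q X : q != 0 ->
  (X - q%:M) * (X + q^-1%:M) = X * X - 1 + (q^-1 - q) *: X.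
Proof.
move=> q0; rewrite mulrBl !mulrDr !scalar_mxMr !scalar_mxMl scale_scalar_mx mulVf //.
by rewrite scalerBl opprD [- (q *: X) - _]addrC addrACA.
Qed.

Lemma commutatorE X Y : commutator X Y = X * Y - Y * X.
Proof. by []. Qed.

Lemma commutatorC X Y : commutator X Y = - commutator Y X.
Proof. by rewrite !commutatorE opprB. Qed.

Lemma commutatorDl X Y Z : commutator (X + Y) Z = commutator X Z + commutator Y Z.
Proof. by rewrite !commutatorE mulrDl mulrDr opprD addrACA. Qed.

Lemma commutatorDr X Y Z : commutator X (Y + Z) = commutator X Y + commutator X Z.
Proof. by rewrite commutatorC commutatorDl opprD -!commutatorC. Qed.

Lemma commutatorNl X Y : commutator (- X) Y = - commutator X Y.
Proof. by rewrite !commutatorE mulNr mulrN opprB opprK addrC. Qed.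

Lemma commutatorNr X Y : commutator X (- Y) = - commutator X Y.
Proof. by rewrite commutatorC commutatorNl opprK -commutatorC. Qed.

Lemma commutatorZl k X Y : commutator (k *: X) Y = k *: commutator X Y.
Proof. by rewrite !commutatorE -scalemxAl_mul -scalemxAr_mul scalerBr. Qed.

Lemma commutatorZr k X Y : commutator X (k *: Y) = k *: commutator X Y.
Proof. by rewrite commutatorC commutatorZl -scalerN -commutatorC. Qed.

Lemma commutator1l X : commutator 1 X = 0.
Proof. by rewrite commutatorE mul1r mulr1 subrr. Qed.

Lemma commutator1r X : commutator X 1 = 0.
Proof. by rewrite commutatorC commutator1l oppr0. Qed.

Lemma commutator_1D X Y : commutator (1 + X) (1 + Y) = commutator X Y.
Proof.
by rewrite commutatorDl !commutatorDr !commutator1l commutator1r !add0r.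
Qed.

Lemma mul3_sub_rev X Y Z :
  X * Y * Z - Z * Y * X =
  commutator X Y * Z + Y * commutator X Z + commutator Y Z * X.
Proof. by rewrite !commutatorE !mulrBl mulrBr !mulrA !addrA !subrK. Qed.

Lemma commutator_affine a b X Y Z W :
  commutator (a *: X - Y) (b *: Z - W) =
  (a * b) *: commutator X Z - (a *: commutator X W + b *: commutator Y Z)
  + commutator Y W.
Proof.
rewrite commutatorDl !commutatorDr !commutatorNl !commutatorNr.
rewrite !commutatorZl !commutatorZr scalerA opprK.
by rewrite opprD !addrA.
Qed.

End SquareMatrices.

Lemma addr3_regroup (V : zmodType) (a1 b1 c1 a2 b2 c2 a3 b3 c3 : V) :
  (a1 - b1 + c1) + (a2 - b2 + c2) + (a3 - b3 + c3) =
  (a1 + a2 + a3) - (b1 + b2 + b3) + (c1 + c2 + c3).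
Proof. by rewrite !opprD (AC (3*3*3) ((1*4*7)*(2*5*8)*(3*6*9))). Qed.

Definition iconj (K : fieldType) (n : nat) (S X : 'M[K]_n) := S * X * S.

Section InvolutiveConjugation.
Variables (K : fieldType) (n : nat) (S : 'M[K]_n).
Hypothesis SS : S * S = 1.
Implicit Types (T X Y : 'M[K]_n) (k : K).

Lemma iconj1 : iconj S 1 = 1.
Proof. by rewrite /iconj mulr1. Qed.

Lemma iconjD X Y : iconj S (X + Y) = iconj S X + iconj S Y.
Proof. by rewrite /iconj mulrDr mulrDl. Qed.

Lemma iconjN X : iconj S (- X) = - iconj S X.
Proof. by rewrite /iconj mulrN mulNr. Qed.

Lemma iconjZ k X : iconj S (k *: X) = k *: iconj S X.
Proof. by rewrite /iconj -scalemxAr_mul -scalemxAl_mul. Qed.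

Lemma iconjM X Y : iconj S (X * Y) = iconj S X * iconj S Y.
Proof. by rewrite /iconj !mulrA -[S * X * S * S]mulrA SS mulr1. Qed.

Lemma iconjK : involutive (iconj S).
Proof. by move=> X; rewrite /iconj !mulrA SS mul1r -mulrA SS mulr1. Qed.

Lemma iconj_iconj T X : iconj (iconj S T) X = iconj S (iconj T (iconj S X)).
Proof. by rewrite /iconj !mulrA. Qed.

Lemma mulrSS X : X * S * S = X.
Proof. by rewrite -mulrA SS mulr1. Qed.

Lemma mul_iconj X : S * X = iconj S X * S.
Proof. by rewrite /iconj mulrSS. Qed.

Lemma commutator_iconj X : commutator S X + commutator S (iconj S X) = 0.
Proof.
rewrite !commutatorE /iconj !mulrA SS mul1r mulrSS.
by rewrite addrA subrK subrr.
Qed.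

End InvolutiveConjugation.

Section BraidedPlacements.
Variables (K : fieldType) (n : nat) (P Q : 'M[K]_n).
Hypotheses (PP : P * P = 1) (QQ : Q * Q = 1) (braidPQ : P * Q * P = Q * P * Q).
Implicit Types (X Y Z s : 'M[K]_n) (k : K).

(* With P = F_12 and Q = F_23 these map X = X_12 to the overlined X_13 and X_23. *)
Definition place13 X := iconj Q X.
Definition place23 X := iconj P (iconj Q X).

Lemma place13_1 : place13 1 = 1. Proof. exact: iconj1. Qed.
Lemma place13D X Y : place13 (X + Y) = place13 X + place13 Y. Proof. exact: iconjD. Qed.
Lemma place13N X : place13 (- X) = - place13 X. Proof. exact: iconjN. Qed.
Lemma place13Z k X : place13 (k *: X) = k *: place13 X. Proof. exact: iconjZ. Qed.
Lemma place23_1 : place23 1 = 1. Proof. by rewrite /place23 !iconj1. Qed.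
Lemma place23D X Y : place23 (X + Y) = place23 X + place23 Y.
Proof. by rewrite /place23 !iconjD. Qed.
Lemma place23N X : place23 (- X) = - place23 X. Proof. by rewrite /place23 !iconjN. Qed.
Lemma place23Z k X : place23 (k *: X) = k *: place23 X. Proof. by rewrite /place23 !iconjZ. Qed.

Lemma place23_P : place23 P = Q.
Proof.
by rewrite /place23 /iconj !mulrA braidPQ -[Q * P * Q * Q]mulrA QQ mulr1 -mulrA PP mulr1.
Qed.

Lemma place23M X Y : place23 (X * Y) = place23 X * place23 Y.
Proof. by rewrite /place23 !iconjM. Qed.

Lemma mulP_place13 X : P * place13 X = place23 X * P.
Proof. exact: mul_iconj PP _. Qed.

Lemma mulP_place23 X : P * place23 X = place13 X * P.
Proof. by rewrite /place23 (mul_iconj PP) iconjK. Qed.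

Lemma mulQ_place13 X : Q * place13 X = X * Q.
Proof. by rewrite /place13 (mul_iconj QQ) iconjK. Qed.

Lemma compatible_place23 Y Z : Y * Q * P = Q * P * Z -> Z = place23 Y.
Proof.
rewrite -mulrA => YQP; rewrite /place23 /place13 /iconj !mulrA.
by rewrite -(mulrA (P * Q * Y)) -(mulrA (P * Q)) YQP !mulrA (mulrSS QQ) PP mul1r.
Qed.

(* Pushing P and Q to the right turns the two sides of the braid relation into the two
   sides of the quantum Yang-Baxter equation for s, times P Q P = Q P Q. *)
Lemma braid_qybe s :
  let R12 := s * P in let R23 := place23 R12 in
  R12 * R23 * R12 = R23 * R12 * R23 ->
  s * place13 s * place23 s = place23 s * place13 s * s.
Proof.
rewrite /= place23M place23_P.
have Pb := mulP_place23 s; have Qs := mul_iconj QQ s; have Pa := mulP_place13 s.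
have Qa := mulQ_place13 s; rewrite -/(place13 s) in Qs.
move: (place13 s) (place23 s) Pb Qs Pa Qa => a b Pb Qs Pa Qa.
have -> : s * P * (b * Q) * (s * P) = s * a * b * (P * Q * P).
  by rewrite !mulrA -(mulrA s) Pb !mulrA -(mulrA _ Q s) Qs !mulrA -(mulrA _ P a) Pa !mulrA.
have -> : b * Q * (s * P) * (b * Q) = b * a * s * (Q * P * Q).
  by rewrite !mulrA -(mulrA b) Qs !mulrA -(mulrA _ P b) Pb !mulrA -(mulrA _ Q a) Qa !mulrA.
have W2 : P * Q * P * (Q * P * Q) = 1.
  by rewrite -braidPQ !mulrA -(mulrA _ P P) PP mulr1 -(mulrA _ Q Q) QQ mulr1 PP.
rewrite -braidPQ => /(congr1 (fun Y => Y * (Q * P * Q))).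
by rewrite -!(mulrA _ (P * Q * P)) W2 !mulr1.
Qed.

Lemma mulP_P13 : P * place13 P = Q * P.
Proof. by rewrite /place13 /iconj !mulrA braidPQ (mulrSS QQ). Qed.

Lemma mulP13_P : place13 P * P = P * Q.
Proof. by rewrite /place13 /iconj -braidPQ (mulrSS PP). Qed.

Lemma mulP13_Q : place13 P * Q = Q * P.
Proof. by rewrite /place13 /iconj (mulrSS QQ). Qed.

Lemma mulQ_P13 : Q * place13 P = P * Q.
Proof. by rewrite /place13 /iconj !mulrA QQ mul1r. Qed.

Lemma P13_involutive : place13 P * place13 P = 1.
Proof. by rewrite /place13 -iconjM // PP iconj1. Qed.

Lemma iconj_braid X : iconj P (iconj Q (iconj P X)) = iconj Q (iconj P (iconj Q X)).
Proof. by rewrite /iconj !mulrA braidPQ -!(mulrA (Q * P * Q * X)) braidPQ !mulrA. Qed.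

Lemma iconjP13 X : iconj (place13 P) X = place23 (iconj P X).
Proof. by rewrite /place13 /place23 iconj_iconj // -iconj_braid. Qed.

Lemma iconjP13_place23 X : iconj (place13 P) (place23 X) = iconj P X.
Proof. by rewrite iconjP13 /place23 !iconjK. Qed.

Lemma commutatorPQ : commutator P Q = - commutator P (place13 P).
Proof. by rewrite !commutatorE mulP_P13 mulP13_P opprB. Qed.

Lemma commutatorP13Q : commutator (place13 P) Q = commutator P (place13 P).
Proof. by rewrite !commutatorE mulP13_Q mulQ_P13 mulP_P13 mulP13_P. Qed.

Lemma iconjP_unitary y : y * P + P * y = 1 -> iconj P y = P - y.
Proof.
move=> yP; have yP' : y * P = 1 - P * y by rewrite -yP addrK.
by rewrite /iconj -mulrA yP' mulrBr mulr1 mulrA PP mul1r.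
Qed.

Lemma commutator_P13_unitary y : y * P + P * y = 1 ->
  commutator y (place13 P) + commutator (place13 P) (place23 y) = commutator P (place13 P).
Proof.
move=> yP; have P13P13 := P13_involutive.
have e1 := mul_iconj P13P13 (place23 y); rewrite iconjP13_place23 iconjP_unitary // in e1.
have e2 := mul_iconj P13P13 y; rewrite iconjP13 iconjP_unitary // place23D place23N place23_P in e2.
rewrite !commutatorE e1 e2 !mulrBl mulQ_P13 mulP_P13 mulP13_P.
by rewrite opprB addrC [_ - y * _ - _]addrAC addrA subrK addrA subrK.
Qed.

Definition cyb X Y :=
  commutator X (place13 Y) + commutator X (place23 Y) + commutator (place13 X) (place23 Y).

Lemma cybe_spectral y k1 k2 k3 :
  y * P + P * y = 1 -> cyb y y = 0 -> k1 * k2 - k1 * k3 + k2 * k3 = k2 ->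
  commutator (k1 *: P - y) (place13 (k2 *: P - y))
  + commutator (k1 *: P - y) (place23 (k3 *: P - y))
  + commutator (place13 (k2 *: P - y)) (place23 (k3 *: P - y)) = 0.
Proof.
move=> yP cyb_y kk.
have diagonal : (k1 * k2) *: commutator P (place13 P) + (k1 * k3) *: commutator P Q
    + (k2 * k3) *: commutator (place13 P) Q = k2 *: commutator P (place13 P).
  by rewrite commutatorPQ commutatorP13Q scalerN -scalerBl -scalerDl kk.
have cross : k1 *: commutator P (place13 y) + k2 *: commutator y (place13 P)
    + (k1 *: commutator P (place23 y) + k3 *: commutator y Q)
    + (k2 *: commutator (place13 P) (place23 y) + k3 *: commutator (place13 y) Q)
    = k2 *: commutator P (place13 P).
  rewrite (@GRing.add _).[AC (2*2*2) ((1*3)*(2*5)*(4*6))] -!scalerDr.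
  rewrite (commutator_iconj PP) commutator_P13_unitary //.
  rewrite [commutator y Q]commutatorC [commutator _ Q]commutatorC -opprD.
  by rewrite (commutator_iconj QQ) oppr0 !scaler0 add0r addr0.
rewrite !(place13D, place13N, place13Z, place23D, place23N, place23Z) place23_P.
by rewrite !commutator_affine addr3_regroup diagonal cross subrr add0r; exact: cyb_y.
Qed.

Lemma cybDl X Y Z : cyb (X + Y) Z = cyb X Z + cyb Y Z.
Proof.
rewrite /cyb place13D !commutatorDl.
by rewrite (@GRing.add _).[AC (2*2*2) ((1*3*5)*(2*4*6))].
Qed.

Lemma cybDr X Y Z : cyb X (Y + Z) = cyb X Y + cyb X Z.
Proof.
rewrite /cyb place13D place23D !commutatorDr.
by rewrite (@GRing.add _).[AC (2*2*2) ((1*3*5)*(2*4*6))].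
Qed.

Lemma cybZ a b X Y : cyb (a *: X) (b *: Y) = (a * b) *: cyb X Y.
Proof.
rewrite /cyb !(place13Z, place23Z, commutatorZl, commutatorZr) !scalerA.
by rewrite [b * a]mulrC -!scalerDr.
Qed.

Definition cubic_rem X :=
  commutator X (place13 X) * place23 X + place13 X * commutator X (place23 X)
  + commutator (place13 X) (place23 X) * X.

Lemma qybe_1D X :
  let s := 1 + X in
  s * place13 s * place23 s - place23 s * place13 s * s = cyb X X + cubic_rem X.
Proof.
rewrite /= mul3_sub_rev place13D place13_1 place23D place23_1 !commutator_1D.
rewrite [_ * (1 + place23 X)]mulrDr [(1 + _) * _]mulrDl [_ * (1 + X)]mulrDr.
rewrite !mulr1 mul1r /cyb /cubic_rem.
by rewrite (@GRing.add _).[AC (2*2*2) ((1*3*5)*(2*4*6))].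
Qed.

End BraidedPlacements.


Section InvolutiveSymmetry.
Variables (K : fieldType) (n : nat) (F : 'M[K]_n).
Hypothesis FF : F * F = 1.
Implicit Types (r x E : 'M[K]_n) (a b h q : K).

Lemma unitarity_half x : (2 : K) != 0 -> F * x * F + x = 2 *: F ->
  2^-1 *: x * F + F * (2^-1 *: x) = 1.
Proof.
move=> two0 /(congr1 (fun Y => Y * F)); rewrite mulrDl (mulrSS FF) -scalemxAl_mul FF.
by move=> xF; rewrite -scalemxAl_mul -scalemxAr_mul -scalerDr addrC xF scalerA mulVf // scale1r.
Qed.

Lemma unitarity_affine r a b : (2 : K) != 0 -> F * r * F + r = 2 *: F -> a + b = 1 ->
  F * (a *: F - 2^-1 *: r) * F + (b *: F - 2^-1 *: r) = 0.
Proof.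
move=> two0 unit_r ab.
rewrite mulrBr mulrBl -!scalemxAr_mul -!scalemxAl_mul (mulrSS FF).
by rewrite addrACA -opprD -scalerDl -scalerDr ab unit_r scale1r scalerA mulVf // scale1r subrr.
Qed.

(* The last summand is O(h^2) as soon as E is. *)
Lemma hecke_expansion r E B h q : q != 0 -> B = (h *: r + E) * F ->
  (F + B - q%:M) * (F + B + q^-1%:M) = h *: (F * r * F + r - 2 *: F)
    + ((F * E * F + E + B * B) + ((q^-1 - q + h * 2) *: (F + B) - (h * 2) *: B)).
Proof.
move=> q0 defB; rewrite hecke_quadraticE //.
have BF : B * F = h *: r + E by rewrite defB (mulrSS FF).
have FB : F * B = h *: (F * r * F) + F * E * F.
  by rewrite defB mulrA mulrDr mulrDl -scalemxAr_mul -scalemxAl_mul.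
have -> : (F + B) * (F + B) - 1 = h *: (F * r * F + r) + (F * E * F + E + B * B).
  rewrite mulrDr !mulrDl FF addrAC [1 + _]addrC addrK BF FB scalerDr.
  by rewrite (@GRing.add _).[AC (2*3) ((3*1)*(4*2*5))].
have -> : (q^-1 - q) *: (F + B)
    = - ((h * 2) *: F) + ((q^-1 - q + h * 2) *: (F + B) - (h * 2) *: B).
  rewrite [(_ + h * 2) *: _]scalerDl [(h * 2) *: (F + B)]scalerDr.
  by rewrite [_ *: (F + B) + (_ + _)]addrA addrK addrCA addNr addr0.
by rewrite scalerBr scalerA addrACA.
Qed.

End InvolutiveSymmetry.

Section TensorPlacement.
Variables (K : fieldType) (N : nat).
Implicit Types A B : 'M[K]_(N * N).

Lemma tens1mx1 m n : (1%:M : 'M[K]_m) *t (1%:M : 'M[K]_n) = 1%:M.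
Proof.
apply/matrixP => i j; case: (mxtens_indexP i) => i1 i2; case: (mxtens_indexP j) => j1 j2.
rewrite tensmxE !mxE (inj_eq (can_inj (@mxtens_indexK _ _))) xpair_eqE.
by rewrite -natrM mulnb.
Qed.

Lemma castmx_mulmx n n' (e : n = n') (A B : 'M[K]_n) :
  castmx (e, e) (A *m B) = castmx (e, e) A *m castmx (e, e) B.
Proof. by case: n' / e; rewrite !castmx_id. Qed.

Lemma op12M A B : op12 (A * B) = op12 A * op12 B.
Proof. by rewrite /op12 -!mulmxE tensmx_mul mulmx1. Qed.

Lemma op12_1 : op12 (1 : 'M[K]_(N * N)) = 1.
Proof. exact: tens1mx1. Qed.

Lemma op12D A B : op12 (A + B) = op12 A + op12 B.
Proof. by apply/matrixP => i j; rewrite !mxE mulrDl. Qed.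

Lemma op12Z k A : op12 (k *: A) = k *: op12 A.
Proof. by apply/matrixP => i j; rewrite !mxE mulrA. Qed.

Lemma op12B A B : op12 (A - B) = op12 A - op12 B.
Proof. by rewrite op12D -scaleN1r op12Z scaleN1r. Qed.

Lemma op23M A B : op23 (A * B) = op23 A * op23 B.
Proof. by rewrite /op23 -!mulmxE -castmx_mulmx tensmx_mul mulmx1. Qed.

Lemma op23_1 : op23 (1 : 'M[K]_(N * N)) = 1.
Proof. by rewrite /op23 tens1mx1; case: _ / (mulnA N N N). Qed.

End TensorPlacement.

Lemma invmx_involutive (K : fieldType) n (A : 'M[K]_n) : A * A = 1 -> invmx A = A.
Proof.
move=> AA; have [Au _] := mulmx1_unit AA.
by rewrite -[invmx A]mulmx1 -[1%:M]AA mulmxA mulVmx // mul1mx.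
Qed.

Section BigO.
Variable R : realType.
Local Notation C := R[i].

Lemma normC_real (x : R) : `|x%:C| = `|x|%:C.
Proof. by rewrite normc_def /= expr0n addr0 sqrtr_sqr. Qed.

Lemma Re_normK (z : C) : (complex.Re `|z|)%:C = `|z|.
Proof. by rewrite normc_def. Qed.

Lemma Re_norm_ge0 (z : C) : 0 <= complex.Re `|z|.
Proof. by rewrite -ler0c Re_normK. Qed.

Definition bigO_scalar k (s : R -> C) :=
  exists M : R, \forall h \near (0 : R)^', `|s h| <= (M * `|h| ^+ k)%:C.

Definition bigO_mx n k (f : R -> 'M[C]_n) :=
  exists M : R, \forall h \near (0 : R)^', forall i j, `|f h i j| <= (M * `|h| ^+ k)%:C.

Lemma le0_near0 (t M : R) : (\forall h \near (0 : R)^', t <= M * `|h|) -> t <= 0.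
Proof.
move=> tM; apply/ler_addgt0Pr => e e0; rewrite add0r.
have Me0 : 0 < e / (`|M| + 1) by rewrite divr_gt0 // ltr_wpDl.
apply: (filter_const (F := (0 : R)^')); apply: filterS2 tM (@dnbhs0_lt _ R _ Me0) => h th hs.
apply: (le_trans th); apply: (le_trans (ler_wpM2r (normr_ge0 h) (ler_norm M))).
rewrite ltr_pdivlMr ?ltr_wpDl // in hs.
by apply/ltW/(le_lt_trans _ hs); rewrite mulrC ler_wpM2l // lerDl.
Qed.

Lemma bigO_mxD n k (f g : R -> 'M[C]_n) :
  bigO_mx k f -> bigO_mx k g -> bigO_mx k (fun h => f h + g h).
Proof.
move=> [M fM] [M' gM]; exists (M + M'); apply: filterS2 fM gM => h fh gh i j.
rewrite mxE mulrDl rmorphD /=; apply: (le_trans (ler_normD _ _)).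
exact: lerD.
Qed.

Lemma bigO_mxN n k (f : R -> 'M[C]_n) : bigO_mx k f -> bigO_mx k (fun h => - f h).
Proof. by move=> [M fM]; exists M; apply: filterS fM => h fh i j; rewrite mxE normrN. Qed.

Lemma bigO_mxB n k (f g : R -> 'M[C]_n) :
  bigO_mx k f -> bigO_mx k g -> bigO_mx k (fun h => f h - g h).
Proof. by move=> fO /bigO_mxN; apply: bigO_mxD. Qed.

Lemma bigO_mxM n a b (f g : R -> 'M[C]_n) :
  bigO_mx a f -> bigO_mx b g -> bigO_mx (a + b) (fun h => f h * g h).
Proof.
move=> [M fM] [M' gM]; exists (n%:R * (M * M')); apply: filterS2 fM gM => h fh gh i j.
rewrite -[_ * g h]/(f h *m g h) mxE; apply: (le_trans (ler_norm_sum _ _ _)).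
rewrite exprD -mulrA mulrACA mulr_natl rmorphMn /= -[n in _ *+ n]card_ord -sumr_const.
by apply: ler_sum => l _; rewrite normrM rmorphM /=; apply: ler_pM.
Qed.

Lemma bigO_mx_cst n (A : 'M[C]_n) : bigO_mx 0 (fun _ => A).
Proof.
exists (\sum_i \sum_j complex.Re `|A i j|); apply: nearW => h i j.
rewrite expr0 mulr1 (bigD1 i) //= (bigD1 j) //= -addrA rmorphD /= Re_normK lerDl ler0c.
by apply: addr_ge0; do ![apply: sumr_ge0 => ? _]; apply: Re_norm_ge0.
Qed.

Lemma bigO_mxS n k (f : R -> 'M[C]_n) : bigO_mx k.+1 f -> bigO_mx k f.
Proof.
move=> [M fM]; exists `|M|; apply: filterS2 fM (@dnbhs0_le _ R _ ltr01) => h fh h1 i j.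
apply: (le_trans (fh i j)); rewrite lecR exprS.
have hk_ge0 : 0 <= `|h| ^+ k by rewrite exprn_ge0.
apply: (le_trans (ler_wpM2r (mulr_ge0 _ hk_ge0) (ler_norm M))) => //.
by rewrite ler_wpM2l // ler_piMl.
Qed.

Lemma bigO_mxZ n a b (s : R -> C) (f : R -> 'M[C]_n) :
  bigO_scalar a s -> bigO_mx b f -> bigO_mx (a + b) (fun h => s h *: f h).
Proof.
move=> [M sM] [M' fM]; exists (M * M'); apply: filterS2 sM fM => h sh fh i j.
by rewrite mxE normrM exprD mulrACA rmorphM; apply: ler_pM.
Qed.

Lemma bigO_mx_op12 N k (f : R -> 'M[C]_(N * N)) :
  bigO_mx k f -> bigO_mx k (fun h => op12 (f h)).
Proof.
move=> [M fM]; exists M; apply: filterS fM => h fh i j.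
rewrite /op12 /tensmx mxE normrM mxE; apply: (le_trans _ (fh _ _)).
by case: eqP => _; rewrite ?normr1 ?normr0 ?mulr1 ?mulr0.
Qed.

Lemma bigO_mx_eq0 n k (D : 'M[C]_n) (f : R -> 'M[C]_n) :
  (\forall h \near (0 : R)^', (h%:C ^+ k) *: D = f h) -> bigO_mx k.+1 f -> D = 0.
Proof.
move=> Df [M fM]; apply/matrixP => i j; rewrite mxE.
suff : complex.Re `|D i j| <= 0 by rewrite -lecR Re_normK normr_le0 => /eqP.
apply: (le0_near0 (M := M)); apply: filterS3 Df fM (nbhs_dnbhs_neq (0 : R)) => h hD fh h0.
have := fh i j; rewrite -hD mxE normrM normrX normC_real -Re_normK -rmorphXn -rmorphM lecR.
rewrite mulrC exprSr mulrA mulrAC ler_pM2r // exprn_gt0 // normr_gt0.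
exact: h0.
Qed.

Lemma bigO_mxMl n k (A : 'M[C]_n) (f : R -> 'M[C]_n) :
  bigO_mx k f -> bigO_mx k (fun h => A * f h).
Proof. exact: bigO_mxM (bigO_mx_cst A). Qed.

Lemma bigO_mxMr n k (A : 'M[C]_n) (f : R -> 'M[C]_n) :
  bigO_mx k f -> bigO_mx k (fun h => f h * A).
Proof. by move=> fO; rewrite -[k]addn0; apply: bigO_mxM fO (bigO_mx_cst A). Qed.

Lemma bigO_mx_commutator n a b (f g : R -> 'M[C]_n) :
  bigO_mx a f -> bigO_mx b g -> bigO_mx (a + b) (fun h => commutator (f h) (g h)).
Proof.
move=> fO gO; apply: bigO_mxB; first exact: bigO_mxM.
by rewrite addnC; apply: bigO_mxM.
Qed.

Lemma bigO_mx_iconj n k (S : 'M[C]_n) (f : R -> 'M[C]_n) :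
  bigO_mx k f -> bigO_mx k (fun h => iconj S (f h)).
Proof. by move=> fO; apply/bigO_mxMr/bigO_mxMl. Qed.

Lemma expR_taylor2 (t : R) : `|t| <= 2^-1 -> 0 <= expR t - 1 - t <= 2 * t ^+ 2.
Proof.
move=> ht; have /andP[ta tb] : - 2^-1 <= t <= 2^-1 by rewrite -ler_norml.
have e1 := expR_ge1Dx t; have e2 := expRxMexpNx_1 t; have e3 := expR_ge1Dx (- t).
have h1 : expR t * (1 - t) <= 1 by rewrite -[X in _ <= X]e2 ler_wpM2l ?expR_ge0.
have h2 : 0 <= t ^+ 2 * (1 - 2 * t) by rewrite mulr_ge0 ?sqr_ge0 //; lra.
apply/andP; split; [lra | nra].
Qed.

Lemma near0_expR (d : R) : 0 < d ->
  \forall h \near (0 : R)^', `|expR h - 1| < d /\ expR h != 1.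
Proof.
move=> d0; have near_exp : \forall h \near (0 : R), `|expR 0 - expR h| < d.
  exact: cvgr_dist_lt (@continuous_expR R 0) _ d0.
apply: filterS2 (nbhs_dnbhs near_exp) (nbhs_dnbhs_neq (0 : R)) => h.
rewrite expR0 distrC => -> h0; split => //.
by apply: contra h0 => /eqP; rewrite -expR0 => /expR_inj ->.
Qed.

Lemma bigO_scalar_id : bigO_scalar 1 (fun h => h%:C).
Proof. by exists 1; apply: nearW => h; rewrite normC_real expr1 mul1r. Qed.

Lemma bigO_scalar_cst (c : C) : bigO_scalar 0 (fun _ => c).
Proof. by exists (complex.Re `|c|); apply: nearW => h; rewrite expr0 mulr1 Re_normK. Qed.

Lemma bigO_scalarM a b (s t : R -> C) :
  bigO_scalar a s -> bigO_scalar b t -> bigO_scalar (a + b) (fun h => s h * t h).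
Proof.
move=> [M sM] [M' tM]; exists (M * M'); apply: filterS2 sM tM => h sh th.
by rewrite normrM exprD mulrACA rmorphM; apply: ler_pM.
Qed.

Lemma bigO_expR_odd :
  bigO_scalar 2 (fun h => ((expR h)%:C)^-1 - (expR h)%:C + h%:C * 2).
Proof.
have half_gt0 : 0 < 2^-1 :> R by rewrite invr_gt0.
exists 2; apply: filterS (@dnbhs0_le _ R _ half_gt0) => h h_small.
have -> : h%:C * 2 = (h * 2)%:C by rewrite rmorphM /= rmorph_nat.
rewrite -fmorphV -expRN -rmorphB -rmorphD normC_real lecR real_normK ?num_real //.
have /andP[a1 a2] := expR_taylor2 h_small.
have /andP[b1 b2] : 0 <= expR (- h) - 1 - - h <= 2 * (- h) ^+ 2.
  by apply: expR_taylor2; rewrite normrN.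
by rewrite sqrrN in b2; rewrite ler_norml; apply/andP; split; lra.
Qed.

End BigO.

Arguments bigO_scalar_id {R}.
Arguments bigO_expR_odd {R}.

Section Placements.
Variables (R : realType) (n : nat) (P Q : 'M[R[i]]_n).

Lemma bigO_cyb a b (f g : R -> 'M[R[i]]_n) :
  bigO_mx a f -> bigO_mx b g -> bigO_mx (a + b) (fun h => cyb P Q (f h) (g h)).
Proof.
move=> fO gO; have f13 := bigO_mx_iconj Q fO; have g13 := bigO_mx_iconj Q gO.
have g23 := bigO_mx_iconj P g13.
by apply: bigO_mxD; [apply: bigO_mxD|]; apply: bigO_mx_commutator.
Qed.

Lemma bigO_cubic_rem (f : R -> 'M[R[i]]_n) :
  bigO_mx 1 f -> bigO_mx 3 (fun h => cubic_rem P Q (f h)).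
Proof.
move=> fO; have f13 := bigO_mx_iconj Q fO; have f23 := bigO_mx_iconj P f13.
apply: bigO_mxD; [apply: bigO_mxD|].
- exact: bigO_mxM (bigO_mx_commutator fO f13) f23.
- exact: bigO_mxM f13 (bigO_mx_commutator fO f23).
- exact: bigO_mxM (bigO_mx_commutator f13 f23) fO.
Qed.

End Placements.

Section FirstOrder.
Variables (R : realType) (N : nat).
Local Notation C := R[i].
Variables (F r : 'M[C]_(N * N)) (Rq : R -> 'M[C]_(N * N)).
Hypothesis FF : F * F = 1.
Hypothesis first_order : bigO_mx 2 (fun h => Rq (expR h) * F - 1 - h%:C *: r).

Let E h := Rq (expR h) * F - 1 - h%:C *: r.
Let B h := (h%:C *: r + E h) * F.

Let RqE h : Rq (expR h) = F + B h.
Proof. by rewrite /B /E [h%:C *: r + _]addrC subrK mulrBl -mulrA FF mulr1 mul1r addrC subrK. Qed.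

Let oB : bigO_mx 1 B.
Proof.
apply: bigO_mxMr; apply: bigO_mxD (bigO_mxS first_order).
exact: bigO_mxZ bigO_scalar_id (bigO_mx_cst r).
Qed.

Lemma hecke_first_order :
  (\forall h \near (0 : R)^', hecke_symmetry (expR h)%:C (Rq (expR h))) ->
  F * r * F + r = 2 *: F.
Proof.
move=> hecke; apply/eqP; rewrite -subr_eq0; apply/eqP.
pose g := fun h : R => ((expR h)%:C)^-1 - (expR h)%:C + h%:C * 2.
pose rem := fun h : R => F * E h * F + E h + B h * B h + (g h *: (F + B h) - (h%:C * 2) *: B h).
apply: (bigO_mx_eq0 (k := 1) (f := fun h => - rem h)); last first.
  apply: bigO_mxN; apply: bigO_mxD.
    by apply: bigO_mxD (bigO_mxM oB oB); apply: bigO_mxD first_order; apply/bigO_mxMr/bigO_mxMl.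
  apply: bigO_mxB; first exact: bigO_mxZ bigO_expR_odd (bigO_mxD (bigO_mx_cst F) (bigO_mxS oB)).
  exact: bigO_mxZ (bigO_scalarM bigO_scalar_id (bigO_scalar_cst 2)) oB.
apply: filterS hecke => h [_ [hecke_h _]].
have q0 : (expR h)%:C != 0 by rewrite fmorph_eq0 gt_eqF ?expR_gt0.
have := hecke_expansion FF q0 (erefl (B h)).
rewrite -RqE [LHS]hecke_h => /esym/eqP; rewrite expr1 addr_eq0 => /eqP ->.
by rewrite /rem -RqE.
Qed.

Lemma braid_first_order :
  op12 F * op23 F * op12 F = op23 F * op12 F * op23 F ->
  (\forall h \near (0 : R)^', braiding (Rq (expR h)) /\ compatible (Rq (expR h)) F) ->
  cyb (op12 F) (op23 F) (op12 r) (op12 r) = 0.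
Proof.
move=> braidF near_braid.
have PP : op12 F * op12 F = 1 by rewrite -op12M FF op12_1.
have QQ : op23 F * op23 F = 1 by rewrite -op23M FF op23_1.
pose x := op12 r; pose e h := op12 (E h); pose X h := h%:C *: x + e h.
have oe : bigO_mx 2 e := bigO_mx_op12 first_order.
have ohx : bigO_mx 1 (fun h => h%:C *: x) := bigO_mxZ bigO_scalar_id (bigO_mx_cst x).
have oX : bigO_mx 1 X := bigO_mxD ohx (bigO_mxS oe).
pose rem h := cyb (op12 F) (op23 F) (h%:C *: x) (e h) + cyb (op12 F) (op23 F) (e h) (X h)
  + cubic_rem (op12 F) (op23 F) (X h).
apply: (bigO_mx_eq0 (k := 2) (f := fun h => - rem h)); last first.
  apply/bigO_mxN/bigO_mxD; last exact: bigO_cubic_rem.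
  by apply: bigO_mxD; [apply: bigO_cyb ohx oe | apply: bigO_cyb oe oX].
apply: filterS near_braid => h [[_ braidR] [compatR _]].
have R12 : op12 (Rq (expR h)) = (1 + X h) * op12 F.
  by rewrite RqE /B -[F in F + _]mul1r -mulrDl op12M op12D op12_1 op12D op12Z.
have R23 := compatible_place23 PP QQ compatR.
have := @braid_qybe _ _ _ _ PP QQ braidF (1 + X h); rewrite /= -R12 -R23 => /(_ braidR) /eqP.
rewrite -subr_eq0 qybe_1D // cybDl cybDr cybZ -expr2 => /eqP cyb_eq.
apply/eqP; rewrite /rem -addr_eq0 [_ *: cyb _ _ x x + _]addrA [_ *: cyb _ _ x x + _]addrA.
by rewrite cyb_eq.
Qed.

End FirstOrder.

Section SpectralRMatrix.
Variables (K : fieldType) (N : nat) (F r : 'M[K]_(N * N)).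
Hypotheses (FF : F * F = 1) (two_neq0 : (2 : K) != 0).
Hypothesis unitary_r : F * r * F + r = 2 *: F.

Lemma rfun_unitarity u v : u != v -> bar21 F (rfun F r v u) + rfun F r u v = 0.
Proof.
move=> uv; rewrite /bar21 /rfun !mulmxE; apply: (unitarity_affine FF) => //.
by field; rewrite !subr_eq0 uv eq_sym uv.
Qed.

Hypothesis braidF : op12 F * op23 F * op12 F = op23 F * op12 F * op23 F.
Hypothesis cyb_r : cyb (op12 F) (op23 F) (op12 r) (op12 r) = 0.

Lemma rfun_cybe u v w : u != v -> u != w -> v != w ->
  commutator (bar12 (rfun F r u v)) (bar13 F (rfun F r u w))
  + commutator (bar12 (rfun F r u v)) (bar23 F (rfun F r v w))
  + commutator (bar13 F (rfun F r u w)) (bar23 F (rfun F r v w)) = 0.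
Proof.
move=> uv uw vw.
have PP : op12 F * op12 F = 1 by rewrite -op12M FF op12_1.
have QQ : op23 F * op23 F = 1 by rewrite -op23M FF op23_1.
have bar13E X : bar13 F X = place13 (op23 F) (op12 X) by rewrite /bar13 invmx_involutive.
have bar23E X : bar23 F X = place23 (op12 F) (op23 F) (op12 X).
  by rewrite /bar23 !invmx_involutive // /place23 /place13 /iconj !mulrA.
rewrite /bar12 !bar13E !bar23E /rfun !op12B !op12Z.
apply: (cybe_spectral PP QQ braidF).
- apply: (unitarity_half PP) => //.
  by rewrite -!op12M -op12D unitary_r op12Z.
- by rewrite cybZ cyb_r scaler0.
- by field; rewrite !subr_eq0 uv uw vw.
Qed.

End SpectralRMatrix.

Lemma first_order_coeff_bigO (R : realType) N (Rq : R -> 'M[R[i]]_(N * N)) F r :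
  first_order_coeff Rq F r -> bigO_mx 2 (fun h => Rq (expR h) * F - 1 - h%:C *: r).
Proof.
move=> [M [d [d0 bound]]]; exists M; apply: filterS (@dnbhs0_lt _ R _ d0) => h hd i j.
by rewrite real_normK ?num_real //; apply: bound.
Qed.

Theorem mainTheorem2 (R : realType) (N : nat)
    (F : 'M[R[i]]_(N * N)) (Rq : R -> 'M[R[i]]_(N * N)) (r : 'M[R[i]]_(N * N)) :
  involutive_symmetry F ->
  (exists delta : R, 0 < delta /\ forall q : R, `|q - 1| < delta ->
      (q != 1 -> hecke_symmetry q%:C (Rq q)) /\ compatible (Rq q) F) ->
  analytic_at1 Rq ->
  Rq 1 = F ->
  first_order_coeff Rq F r ->
  (forall u v : R[i], u != v ->
     bar21 F (rfun F r v u) + rfun F r u v = 0) /\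
  (forall u v w : R[i], u != v -> u != w -> v != w ->
     commutator (bar12 (rfun F r u v)) (bar13 F (rfun F r u w))
     + commutator (bar12 (rfun F r u v)) (bar23 F (rfun F r v w))
     + commutator (bar13 F (rfun F r u w)) (bar23 F (rfun F r v w)) = 0).
Proof.
move=> [[_ braidF] FF] [delta [delta_gt0 HRq]] _ _ /first_order_coeff_bigO first_order.
have near_Rq : \forall h \near (0 : R)^',
    hecke_symmetry (expR h)%:C (Rq (expR h)) /\ compatible (Rq (expR h)) F.
  apply: filterS (near0_expR delta_gt0) => h [h_close h_ne1].
  by have [hecke compat] := HRq _ h_close; split => //; apply: hecke.
have two_neq0 : (2 : R[i]) != 0 by rewrite pnatr_eq0.
have unitary_r : F * r * F + r = 2 *: F.
  by apply: (hecke_first_order FF first_order); apply: filterS near_Rq => h [].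
have cyb_r : cyb (op12 F) (op23 F) (op12 r) (op12 r) = 0.
  by apply: (braid_first_order FF first_order braidF); apply: filterS near_Rq => h [[]].
split; [exact: rfun_unitarity | exact: rfun_cybe].
Qed.
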